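(* Assume $C^\top C\succ0$ and that $r_1$ is proper (i.e. some $\widetilde W$ has $r_1(\widetilde W)<\infty$). Let $\gamma>0$ and let $\sigma_i\downarrow0$ be a decreasing sequence of positive numbers. With $H_\sigma$ and $H$ as in the context: 1. $\inf H_{\sigma_i}\to\inf H$. 2. There is a set $N\subseteq\mathbb{N}$ with $\mathbb{N}\setminus N$ finite such that for $v\in N$ the sets $\operatorname{argmin}H_{\sigma_v}$ are nonempty and form a bounded sequence, and $\limsup_{v}(\operatorname{argmin}H_{\sigma_v})\subseteq\operatorname{argmin}H$. 3. For any sequence $\epsilon_i\downarrow0$ and any choice $\widetilde W_i\in\epsilon_i\text{-}\operatorname{argmin}H_{\sigma_i}:=\{\widetilde W: H_{\sigma_i}(\widetilde W)\le\inf H_{\sigma_i}+\epsilon_i\}$, the sequence $(\widetilde W_i)$ is bounded and all its cluster points belong to $\operatorname{argmin}H$.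
   Context: Let $n,m,M\ge1$, $p=m+n$. For $i=1,\dots,M$ let $A_i\in\mathbb{R}^{n\times n}$, $B_{2,i}\in\mathbb{R}^{n\times m}$, $F_i=\begin{bmatrix}A_i&B_{2,i}\\0&0\end{bmatrix}$. Let $B_1\in\mathbb{R}^{n\times l}$, $C\in\mathbb{R}^{q\times n}$, $D\in\mathbb{R}^{q\times m}$ with $C^\top D=0$, $D^\top D\succ0$, $B_1B_1^\top\succ0$; $Q=\begin{bmatrix}B_1B_1^\top&0\\0&0\end{bmatrix}$, $R=\begin{bmatrix}C^\top C&0\\0&D^\top D\end{bmatrix}$, $V_1=[0,\ I_m]\in\mathbb{R}^{m\times p}$, $V_2=[I_n,\ 0]\in\mathbb{R}^{n\times p}$, $\Psi_i(W)=-V_2(F_iW+WF_i^\top+Q)V_2^\top$. $\mathrm{vec}$ is column-stacking, so $(V_2\otimes V_1)\mathrm{vec}(W)=\mathrm{vec}(V_1WV_2^\top)\in\mathbb{R}^{mn}$. $\Gamma^k_+=\{\mathrm{vec}(X):X\in\mathbb{S}^k_+\}$, $\delta_S$ the indicator of $S$, $\Omega=\{\mathrm{vec}(W):W_{ij}=0\ \text{for }1\le i<j\le n\}$. For $\widetilde W=\mathrm{vec}(W)\in\mathbb{R}^{p^2}$: $r_1(\widetilde W)=\langle\mathrm{vec}(R),\widetilde W\rangle+\delta_{\Gamma^p_+}(\widetilde W)+\sum_{i=1}^M\delta_{\Gamma^n_+}(\mathrm{vec}(\Psi_i(W)))+\delta_\Omega(\widetilde W)$. For $\sigma>0$ and $t\in\mathbb{R}$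 let $f_\sigma(t)=1-e^{-t/\sigma}$, and for $x\in\mathbb{R}^{mn}$, $f_\sigma(|x|)=\sum_kf_\sigma(|x_k|)$. Define $H_\sigma(\widetilde W)=r_1(\widetilde W)+\gamma f_\sigma(|(V_2\otimes V_1)\widetilde W|)$ and $H(\widetilde W)=r_1(\widetilde W)+\gamma\|(V_2\otimes V_1)\widetilde W\|_0$, where $\|\cdot\|_0$ counts nonzero entries. For a sequence of sets $S_v$, $\limsup_vS_v$ is the outer limit: the set of cluster points of sequences $(s_v)$ with $s_v\in S_v$ along a subsequence. *)

From HB Require Import structures.
From mathcomp Require Import all_boot all_order all_algebra.
From mathcomp Require Import all_classical all_reals all_analysis.
Set Implicit Arguments. Unset Strict Implicit. Unset Printing Implicit Defensive.
Import Order.TTheory GRing.Theory Num.Theory.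
Import numFieldNormedType.Exports.
Local Open Scope classical_set_scope.
Local Open Scope ring_scope.

Section Defs.
Variable R : realType.

Definition psd k (X : 'M[R]_k) : Prop :=
  X^T = X /\ forall x : 'cV[R]_k, 0 <= (x^T *m X *m x) 0 0.
Definition pd k (X : 'M[R]_k) : Prop :=
  X^T = X /\ forall x : 'cV[R]_k, x != 0 -> 0 < (x^T *m X *m x) 0 0.

Variables (n m M l q : nat).
Variables (A : 'I_M -> 'M[R]_n) (B2 : 'I_M -> 'M[R]_(n, m)).
Variables (B1 : 'M[R]_(n, l)) (C : 'M[R]_(q, n)) (D : 'M[R]_(q, m)).

(* p = n + m; block ordering: first n (state) then m (input) coordinates *)
Definition Fmat (i : 'I_M) : 'M[R]_(n + m) := block_mx (A i) (B2 i) 0 0.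
Definition Qmat : 'M[R]_(n + m) := block_mx (B1 *m B1^T) 0 0 0.
Definition Rmat : 'M[R]_(n + m) := block_mx (C^T *m C) 0 0 (D^T *m D).
Definition V1 : 'M[R]_(m, n + m) := row_mx 0 1%:M.
Definition V2 : 'M[R]_(n, n + m) := row_mx 1%:M 0.
Definition Psi (i : 'I_M) (W : 'M[R]_(n + m)) : 'M[R]_n :=
  - (V2 *m (Fmat i *m W + W *m (Fmat i)^T + Qmat) *m V2^T).

Definition in_Omega (W : 'M[R]_(n + m)) : Prop :=
  forall i j : 'I_n, (i < j)%N -> W (lshift m i) (lshift m j) = 0.

Definition inner (W : 'M[R]_(n + m)) : R :=
  \sum_(i < n + m) \sum_(j < n + m) Rmat i j * W i j.

Definition r1 (W : 'M[R]_(n + m)) : \bar R :=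
  if `[< psd W /\ (forall i, psd (Psi i W)) /\ in_Omega W >]
  then (inner W)%:E else +oo%E.

(* (V2 ⊗ V1) vec W = vec (V1 W V2^T); its entries are those of V1 W V2^T *)
Definition Kx (W : 'M[R]_(n + m)) : 'M[R]_(m, n) := V1 *m W *m V2^T.

Definition fsig (s t : R) : R := 1 - expR (- (t / s)).

Definition fsum (s : R) (x : 'M[R]_(m, n)) : R :=
  \sum_(i < m) \sum_(j < n) fsig s `|x i j|.

Definition l0 (x : 'M[R]_(m, n)) : nat :=
  (\sum_(i < m) \sum_(j < n) (x i j != 0%R : nat))%N.

Definition Hsig (gamma s : R) (W : 'M[R]_(n + m)) : \bar R :=
  (r1 W + (gamma * fsum s (Kx W))%:E)%E.

Definition Hl0 (gamma : R) (W : 'M[R]_(n + m)) : \bar R :=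
  (r1 W + (gamma * (l0 (Kx W))%:R)%:E)%E.

End Defs.

Definition inf_of (R : realType) (T : Type) (f : T -> \bar R) : \bar R :=
  ereal_inf (range f).

(* argmin in the Rockafellar--Wets sense: points attaining a finite infimum *)
Definition argmin (R : realType) (T : Type) (f : T -> \bar R) : set T :=
  [set x | f x = inf_of f /\ (f x < +oo)%E].

Definition eps_argmin (R : realType) (T : Type) (eps : R) (f : T -> \bar R) : set T :=
  [set x | (f x <= inf_of f + eps%:E)%E].

Definition bounded_in (R : realType) (V : normedModType R) (S : set V) : Prop :=
  exists B : R, forall x, S x -> `|x| <= B.

Definition cluster_point (R : realType) (V : normedModType R) (u : nat -> V) (x : V) : Prop :=
  exists phi : nat -> nat, (forall k, (phi k < phi k.+1)%N) /\
    (fun k => u (phi k)) @ \oo --> x.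

Definition outer_limit (R : realType) (V : normedModType R) (S : nat -> set V) : set V :=
  [set x | exists phi : nat -> nat, (forall k, (phi k < phi k.+1)%N) /\
    exists s : nat -> V, (forall k, S (phi k) (s k)) /\ s @ \oo --> x].

From HB Require Import structures.
From mathcomp Require Import all_boot all_order all_algebra.
From mathcomp Require Import all_classical all_reals all_analysis.
From mathcomp Require Import lra ring.
Import Order.TTheory GRing.Theory Num.Theory.
Import numFieldNormedType.Exports.
Local Open Scope classical_set_scope.
Local Open Scope ring_scope.

Set Implicit Arguments. Unset Strict Implicit. Unset Printing Implicit Defensive.

(* As sigma decreases to 0, f_sigma(t) = 1 - exp(-t/sigma) increases to the
   indicator of t <> 0, so H_sigma increases pointwise to H.  Each H_sigma is
   lower semicontinuous (the feasible set of r_1 is closed, the objective is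
   continuous), and all of them are level-bounded uniformly in sigma: writing
   <vec R, W> as a sum of quadratic forms of W at the columns of [C 0]^T and
   [0 D]^T, positive definiteness of C^T C and D^T D shows that it vanishes on
   the PSD cone only at W = 0, hence grows linearly in |W| there.  For such a
   monotone family, Bolzano-Weierstrass turns (approximate) minimizers into
   convergent subsequences whose limits minimize H, which gives all three
   claims; every argmin H_sigma is in fact nonempty, so N is all of nat. *)

Lemma leq_subseq (phi : nat -> nat) :
  (forall k, (phi k < phi k.+1)%N) -> forall k, (k <= phi k)%N.
Proof. by move=> phiS; elim=> [|k ih] //; exact: leq_ltn_trans ih (phiS k). Qed.

Lemma subseq_comp (phi psi : nat -> nat) :
  (forall k, (phi k < phi k.+1)%N) -> (forall k, (psi k < psi k.+1)%N) ->
  forall k, (phi (psi k) < phi (psi k.+1))%N.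
Proof. by move=> phiS psiS k; apply: (homo_ltn ltn_trans phiS); exact: psiS. Qed.

Lemma cvg_subseq {T : topologicalType} (u : nat -> T) (x : T) (phi : nat -> nat) :
  (forall k, (phi k < phi k.+1)%N) -> u @ \oo --> x ->
  (fun k => u (phi k)) @ \oo --> x.
Proof.
move=> phiS ux; apply: cvg_comp _ _ _ ux => P [N _ NP]; exists N => // k /= Nk.
exact/NP/(leq_trans Nk (leq_subseq phiS k)).
Qed.

Section RealLimits.
Variable R : realType.

Lemma cvgr_to_le_eps (g : nat -> R) (l a : R) : g @ \oo --> l ->
  (forall e, 0 < e -> \forall k \near \oo, g k <= a + e) -> l <= a.
Proof. by move=> gl ga; apply/ler_addgt0Pr => e /ga; exact: cvgr_to_le gl. Qed.

Lemma cvg_sum_ord c (g : 'I_c -> nat -> R) (l : 'I_c -> R) :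
  (forall i, g i @ \oo --> l i) ->
  (fun k => \sum_(i < c) g i k) @ \oo --> \sum_(i < c) l i.
Proof. by move=> gl; apply: cvg_big => //; exact: add_continuous. Qed.

End RealLimits.

Section MatrixLimits.
Variable R : realType.
Implicit Types a b c : nat.

Lemma mx_entry_le_norm a b (M : 'M[R]_(a, b)) i j : `|M i j| <= `|M|.
Proof.
rewrite [leRHS]/Num.Def.normr /= mx_normrE; apply/bigmax_geP; right.
by exists (i, j).
Qed.

Lemma mx_norm_lt a b (M : 'M[R]_(a, b)) e :
  0 < e -> (forall i j, `|M i j| < e) -> `|M| < e.
Proof.
move=> e0 Me; rewrite [ltLHS]/Num.Def.normr /= mx_normrE.
by apply: (big_ind (fun y => y < e)) => // x y; rewrite gt_max => -> ->.
Qed.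

Lemma cvg_mxP a b (u : nat -> 'M[R]_(a, b)) (X : 'M[R]_(a, b)) :
  u @ \oo --> X <-> forall i j, (fun k => u k i j) @ \oo --> X i j.
Proof.
split=> [uX i j|uX]; first exact: cvg_comp uX (@coord_continuous _ _ _ i j X).
apply/cvgrPdist_lt => e e0.
have : \forall k \near \oo, forall ij : 'I_a * 'I_b,
    `|X ij.1 ij.2 - u k ij.1 ij.2| < e.
  by apply: filter_forall => -[i j]; move/cvgrPdist_lt : (uX i j); exact.
apply: filterS => k ek; apply: mx_norm_lt => // i j; rewrite !mxE.
exact: (ek (i, j)).
Qed.

Lemma cvg_mulmxl a b c (A : 'M[R]_(c, a)) (u : nat -> 'M[R]_(a, b)) (X : 'M[R]_(a, b)) :
  u @ \oo --> X -> (fun k => A *m u k) @ \oo --> A *m X.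
Proof.
move=> /cvg_mxP uX; apply/cvg_mxP => i j; rewrite mxE; under eq_cvg do rewrite mxE.
by apply: cvg_sum_ord => d; apply: cvgM; [exact: cvg_cst | exact: uX].
Qed.

Lemma cvg_mulmxr a b c (B : 'M[R]_(b, c)) (u : nat -> 'M[R]_(a, b)) (X : 'M[R]_(a, b)) :
  u @ \oo --> X -> (fun k => u k *m B) @ \oo --> X *m B.
Proof.
move=> /cvg_mxP uX; apply/cvg_mxP => i j; rewrite mxE; under eq_cvg do rewrite mxE.
by apply: cvg_sum_ord => d; apply: cvgM; [exact: uX | exact: cvg_cst].
Qed.

Lemma cvg_trmx a b (u : nat -> 'M[R]_(a, b)) (X : 'M[R]_(a, b)) :
  u @ \oo --> X -> (fun k => (u k)^T) @ \oo --> X^T.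
Proof.
move=> /cvg_mxP uX; apply/cvg_mxP => i j; rewrite mxE.
by under eq_cvg do rewrite mxE; exact: uX.
Qed.

Lemma subseq_cvg_entries a b (s : seq ('I_a * 'I_b)) (u : nat -> 'M[R]_(a, b)) B :
  (forall k, `|u k| <= B) ->
  exists phi : nat -> nat, (forall k, (phi k < phi k.+1)%N) /\
    forall ij, ij \in s -> cvgn (fun k => u (phi k) ij.1 ij.2).
Proof.
move=> uB; elim: s => [|ij s [phi [phiS phi_cvg]]]; first by exists id.
have ij_bounded : bounded_fun (fun k => u (phi k) ij.1 ij.2).
  exists B; split; first exact: num_real.
  move=> M BM x _; apply: le_trans (mx_entry_le_norm _ _ _) _.
  exact: le_trans (uB _) (ltW BM).
have [psi psi_incr psi_cvg] := bolzano_weierstrass ij_bounded.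
have psiS := (increasing_seqP psi).2 psi_incr.
exists (phi \o psi); split; first exact: subseq_comp phiS psiS.
move=> ij'; rewrite inE => /orP[/eqP-> //|ij's].
have /cvg_ex [l ul] := phi_cvg ij' ij's.
by apply/cvg_ex; exists l; exact: cvg_subseq ul.
Qed.

Lemma mx_bolzano_weierstrass a b (u : nat -> 'M[R]_(a, b)) B :
  (forall k, `|u k| <= B) ->
  exists phi : nat -> nat, (forall k, (phi k < phi k.+1)%N) /\
    exists X : 'M[R]_(a, b), (fun k => u (phi k)) @ \oo --> X.
Proof.
move=> /(subseq_cvg_entries (enum [set: 'I_a * 'I_b]))[phi [phiS phi_cvg]].
have /choice [l ul] : forall ij : 'I_a * 'I_b,
    exists l : R, (fun k => u (phi k) ij.1 ij.2) @ \oo --> l.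
  by move=> ij; apply/cvg_ex/phi_cvg; rewrite mem_enum in_setT.
exists phi; split => //; exists (\matrix_(i, j) l (i, j)).
by apply/cvg_mxP => i j; rewrite mxE; exact: (ul (i, j)).
Qed.

End MatrixLimits.

Section QuadraticForms.
Variable R : realType.

Definition bform k (V : 'M[R]_k) (x y : 'cV[R]_k) : R := (x^T *m V *m y) 0 0.

Lemma bformDZ k (V : 'M[R]_k) x y t :
  bform V (x + t *: y) (x + t *: y) =
  bform V x x + t * bform V x y + t * bform V y x + t * t * bform V y y.
Proof.
rewrite /bform !(mulmxDr, mulmxDl, linearD, linearZ) /=.
by rewrite -?scalemxAl -?scalemxAr -?scalemxAl !mxE; ring.
Qed.

Lemma bformC k (V : 'M[R]_k) x y : V^T = V -> bform V x y = bform V y x.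
Proof.
move=> Vsym; have trE : ((x^T *m V *m y)^T) 0 0 = (x^T *m V *m y) 0 0 by rewrite mxE.
by rewrite /bform -trE !trmx_mul trmxK Vsym mulmxA.
Qed.

Lemma dotmx_ge0 k (y : 'cV[R]_k) : 0 <= (y^T *m y) 0 0.
Proof. by rewrite mxE; apply: sumr_ge0 => c _; rewrite mxE -expr2 sqr_ge0. Qed.

Lemma dotmx_eq0 k (y : 'cV[R]_k) : (y^T *m y) 0 0 = 0 -> y = 0.
Proof.
rewrite mxE => y0; apply/matrixP => i j; rewrite (ord1 j) mxE.
have /psumr_eq0P y2_0 : \sum_(c < k) y c 0 ^+ 2 = 0.
  by rewrite -[RHS]y0; apply: eq_bigr => c _; rewrite mxE expr2.
by apply/eqP; rewrite -sqrf_eq0 y2_0 // => c _; exact: sqr_ge0.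
Qed.

Lemma psd_bform_eq0 k (V : 'M[R]_k) x : psd V -> bform V x x = 0 -> V *m x = 0.
Proof.
move=> [Vsym V_ge0] Vx0; set y := V *m x.
have xy : bform V x y = (y^T *m y) 0 0.
  by rewrite (bformC _ _ Vsym) /bform /y trmx_mul Vsym mulmxA.
have yx : bform V y x = (y^T *m y) 0 0 by rewrite /bform -mulmxA.
set s := (y^T *m y) 0 0 in xy yx; set Q := bform V y y.
have Q_ge0 : 0 <= Q by exact: V_ge0.
have s_ge0 : 0 <= s by exact: dotmx_ge0.
(* 0 <= q(x + t y) = 2 t s + t^2 Q forces s = 0 when t = -s/(Q+1). *)
pose t := - s / (Q + 1).
have tQ : t * (Q + 1) = - s by rewrite /t mulrVK // unitfE gt_eqF //; lra.
have := V_ge0 (x + t *: y); rewrite -/(bform V _ _) bformDZ Vx0 xy yx -/Q => ge0.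
by apply: dotmx_eq0; rewrite -/s; nra.
Qed.

Lemma psdZ k a (V : 'M[R]_k) : 0 <= a -> psd V -> psd (a *: V).
Proof.
move=> a0 [Vsym V_ge0]; split; first by rewrite linearZ /= Vsym.
by move=> x; rewrite -scalemxAr -scalemxAl mxE mulr_ge0.
Qed.

Lemma psd_closed k (u : nat -> 'M[R]_k) (X : 'M[R]_k) :
  u @ \oo --> X -> (\forall j \near \oo, psd (u j)) -> psd X.
Proof.
move=> uX u_psd; split.
  have uTX : (fun j => (u j)^T) @ \oo --> X.
    by apply: cvg_trans uX; apply: near_eq_cvg; apply: filterS u_psd => j [].
  exact: cvg_unique (cvg_trmx uX) uTX.
move=> x; have := cvg_mulmxr (B := x) (cvg_mulmxl (A := x^T) uX).
move=> /cvg_mxP /(_ 0 0) xuX; apply: cvgr_to_ge xuX _.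
by apply: filterS u_psd => j [_]; exact.
Qed.

Lemma pd_gram_mulmx_eq0 q k c (K : 'M[R]_(q, k)) (X : 'M[R]_(k, c)) :
  pd (K^T *m K) -> K *m X = 0 -> X = 0.
Proof.
move=> [_ KK_pos] KX0; apply/matrixP => i j; rewrite mxE.
have Kx0 : K *m col j X = 0 by rewrite colE mulmxA KX0 mul0mx.
case: (eqVneq (col j X) 0) => [/matrixP/(_ i 0)|/KK_pos]; first by rewrite !mxE.
by rewrite !mulmxA -trmx_mul -mulmxA Kx0 mulmx0 mxE ltxx.
Qed.

Lemma psd_gram_sum_eq0 q k (K : 'M[R]_(q, k)) (W : 'M[R]_k) : psd W ->
  \sum_(c < q) bform W (col c K^T) (col c K^T) = 0 -> K *m W = 0.
Proof.
move=> W_psd /psumr_eq0P sum0; apply/row_matrixP => c; rewrite row_mul row0.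
have := psd_bform_eq0 W_psd (sum0 (fun c _ => W_psd.2 _) c isT).
by rewrite -[row c K]trmxK -tr_row -{2}W_psd.1 -trmx_mul => ->; rewrite trmx0.
Qed.

End QuadraticForms.

Section Objective.
Variable R : realType.
Variables (n m q : nat) (C : 'M[R]_(q, n)) (D : 'M[R]_(q, m)).
Hypotheses (C_pd : pd (C^T *m C)) (D_pd : pd (D^T *m D)).

Let Ch : 'M[R]_(q, n + m) := row_mx C 0.
Let Dh : 'M[R]_(q, n + m) := row_mx 0 D.

Lemma gram_inner_sum p (K : 'M[R]_(q, p)) (W : 'M[R]_p) :
  \sum_i \sum_j (K^T *m K) i j * W i j = \sum_c bform W (col c K^T) (col c K^T).
Proof.
transitivity (\sum_c \sum_i \sum_j K c i * W i j * K c j).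
  have KKW i j : (K^T *m K) i j * W i j = \sum_c K c i * W i j * K c j.
    by rewrite !mxE big_distrl; apply: eq_bigr => c _; rewrite !mxE mulrAC.
  under eq_bigr do under eq_bigr do rewrite KKW.
  by under eq_bigr do rewrite exchange_big; rewrite exchange_big.
apply: eq_bigr => c _; rewrite /bform mxE.
under [RHS]eq_bigr do rewrite mxE big_distrl.
by rewrite exchange_big; apply: eq_bigr => i _; apply: eq_bigr => j _; rewrite !mxE.
Qed.

Lemma innerE (W : 'M[R]_(n + m)) : inner C D W =
  \sum_c bform W (col c Ch^T) (col c Ch^T) + \sum_c bform W (col c Dh^T) (col c Dh^T).
Proof.
have Rmat_gram : Rmat C D = Ch^T *m Ch + Dh^T *m Dh.
  rewrite /Rmat /Ch /Dh !tr_row_mx !mul_col_row !trmx0 !mul0mx !mulmx0.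
  by rewrite add_block_mx !addr0 !add0r.
rewrite /inner Rmat_gram -!gram_inner_sum -big_split; apply: eq_bigr => i _.
by rewrite -big_split; apply: eq_bigr => j _; rewrite mxE mulrDl.
Qed.

Lemma inner_ge0 (W : 'M[R]_(n + m)) : psd W -> 0 <= inner C D W.
Proof.
by move=> [_ W_ge0]; rewrite innerE; apply: addr_ge0; apply: sumr_ge0 => c _; exact: W_ge0.
Qed.

Lemma psd_inner_eq0 (W : 'M[R]_(n + m)) : psd W -> inner C D W = 0 -> W = 0.
Proof.
move=> W_psd; rewrite innerE => /eqP.
have sum_ge0 p (K : 'M[R]_(p, n + m)) : 0 <= \sum_c bform W (col c K^T) (col c K^T).
  by apply: sumr_ge0 => c _; exact: W_psd.2.
rewrite paddr_eq0 ?sum_ge0 // => /andP[/eqP/(psd_gram_sum_eq0 W_psd) CW0].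
move=> /eqP/(psd_gram_sum_eq0 W_psd) DW0.
rewrite -[W]vsubmxK /Ch mul_row_col mul0mx addr0 in CW0.
rewrite -[W]vsubmxK /Dh mul_row_col mul0mx add0r in DW0.
by rewrite -[W]vsubmxK (pd_gram_mulmx_eq0 C_pd CW0) (pd_gram_mulmx_eq0 D_pd DW0) col_mx0.
Qed.

Lemma innerZ a (W : 'M[R]_(n + m)) : inner C D (a *: W) = a * inner C D W.
Proof.
rewrite /inner mulr_sumr; apply: eq_bigr => i _; rewrite mulr_sumr.
by apply: eq_bigr => j _; rewrite [(a *: W) i j]mxE mulrCA.
Qed.

Lemma cvg_inner (u : nat -> 'M[R]_(n + m)) (X : 'M[R]_(n + m)) :
  u @ \oo --> X -> (fun k => inner C D (u k)) @ \oo --> inner C D X.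
Proof.
move=> /cvg_mxP uX; apply: cvg_sum_ord => i; apply: cvg_sum_ord => j.
by apply: cvgM; [exact: cvg_cst | exact: uX].
Qed.

Lemma psd_inner_lower_bound : exists2 mu : R, 0 < mu &
  forall U : 'M[R]_(n + m), psd U -> `|U| = 1 -> mu <= inner C D U.
Proof.
apply: contrapT => no_mu.
have /choice[U /all_and3[U_psd U1 U_inner]] : forall k : nat,
    exists U : 'M[R]_(n + m), [/\ psd U, `|U| = 1 & inner C D U < k.+1%:R^-1].
  move=> k; apply: contrapT => no_U; apply: no_mu; exists k.+1%:R^-1 => // V V_psd V1.
  by rewrite leNgt; apply/negP => ?; apply: no_U; exists V.
have U_bounded k : `|U k| <= 1 by rewrite U1.
have [phi [phiS [Y UY]]] := mx_bolzano_weierstrass U_bounded.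
have Y_psd : psd Y by apply: psd_closed UY _; apply: nearW => k.
have Y1 : `|Y| = 1.
  have U1_cvg : (fun k => `|U (phi k)|) @ \oo --> (1 : R).
    by under eq_cvg do rewrite U1; exact: cvg_cst.
  exact: cvg_unique (cvg_norm UY) U1_cvg.
have Y0 : inner C D Y = 0.
  apply/le_anti; rewrite inner_ge0 // andbT.
  apply: cvgr_to_le_eps (cvg_inner UY) _ => e e0; rewrite add0r.
  have [N _ Ne] := cvgr_le 0 (cvg_subseq phiS (@cvg_harmonic R)) e e0.
  by exists N => // k /= Nk; apply/ltW/(lt_le_trans (U_inner _))/Ne.
by move: Y1; rewrite (psd_inner_eq0 Y_psd Y0) normr0 => /eqP; rewrite eq_sym oner_eq0.
Qed.

Lemma inner_sublevel_bounded c : exists B : R, forall W : 'M[R]_(n + m),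
  psd W -> inner C D W <= c -> `|W| <= B.
Proof.
have [mu mu0 muP] := psd_inner_lower_bound.
exists (Num.max c 0 / mu) => W W_psd Wc.
have [->|W0] := eqVneq W 0; first by rewrite normr0 divr_ge0 // ?le_max ?lexx ?orbT // ltW.
have nW : 0 < `|W| by rewrite normr_gt0.
have nW' : 0 <= `|W|^-1 by rewrite invr_ge0 ltW.
have := muP (`|W|^-1 *: W) (psdZ nW' W_psd).
rewrite normrZ ger0_norm // mulVf ?gt_eqF // innerZ => /(_ erefl).
rewrite mulrC ler_pdivlMr // => muW.
rewrite ler_pdivlMr // mulrC; apply: le_trans muW (le_trans Wc _).
by rewrite le_max lexx.
Qed.

End Objective.

Section SmoothedCount.
Variable R : realType.
Implicit Types s t : R.

Lemma fsig_ge0 s t : 0 < s -> 0 <= t -> 0 <= fsig s t.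
Proof. by move=> s0 t0; rewrite /fsig subr_ge0 expR_le1 oppr_le0 divr_ge0 // ltW. Qed.

Lemma fsig_le_nz s t : 0 <= t -> fsig s t <= (t != 0)%:R.
Proof.
move=> t0; have [->|_] := eqVneq t 0; first by rewrite /fsig mul0r oppr0 expR0 subrr.
by rewrite /fsig lerBlDr lerDl expR_ge0.
Qed.

Lemma fsig_le s s' t : 0 < s' -> s' <= s -> 0 <= t -> fsig s t <= fsig s' t.
Proof.
move=> s'0 s's t0; rewrite /fsig lerD2l lerN2 ler_expR lerN2.
by rewrite ler_wpM2l // lef_pV2 // posrE (lt_le_trans s'0).
Qed.

Lemma fsig_cvg_nz (s : nat -> R) t : (forall j, 0 < s j) -> s @ \oo --> 0 ->
  0 <= t -> (fun j => fsig (s j) t) @ \oo --> ((t != 0)%:R : R).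
Proof.
move=> s_gt0 s_cvg0 t0; have [->|tn0] := eqVneq t 0.
  by under eq_cvg do rewrite /fsig mul0r oppr0 expR0 subrr; exact: cvg_cst.
have t_gt0 : 0 < t by rewrite lt_def tn0.
have t_s_cvg : (fun j => t / s j) @ \oo --> +oo.
  have t_s_gt0 : \forall j \near \oo, 0 < t / s j.
    by apply: nearW => j; rewrite divr_gt0.
  apply: (gtr0_cvgV0 t_s_gt0).1.
  rewrite (_ : unstable.inv_fun _ = (fun j => s j / t)); last first.
    by apply/funext => j; rewrite /= invf_div.
  by rewrite -(mul0r t^-1); apply: cvgMl.
have exp_cvg0 := cvg_comp _ _ t_s_cvg (@cvgr_expR R).
rewrite (_ : _%:R = 1 - 0 :> R); last by rewrite subr0.
exact: cvgB (cvg_cst _) exp_cvg0.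
Qed.

Lemma fsig_continuous s : continuous (fsig s).
Proof.
move=> t; apply: cvgB; first exact: cvg_cst.
apply: continuous_cvg; first exact: continuous_expR.
by apply: cvgN; apply: cvgMl; exact: cvg_id.
Qed.

Variables (m n : nat).
Implicit Types x : 'M[R]_(m, n).

Lemma fsum_ge0 s x : 0 < s -> 0 <= fsum s x.
Proof. by move=> s0; do 2!apply: sumr_ge0 => ? _; exact: fsig_ge0. Qed.

Lemma fsum_le_l0 s x : fsum s x <= (l0 x)%:R.
Proof.
rewrite /l0 natr_sum; apply: ler_sum => i _; rewrite natr_sum.
by apply: ler_sum => j _; rewrite -normr_eq0 fsig_le_nz.
Qed.

Lemma fsum_le s s' x : 0 < s' -> s' <= s -> fsum s x <= fsum s' x.
Proof. by move=> s'0 s's; do 2!apply: ler_sum => ? _; exact: fsig_le. Qed.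

Lemma fsum_cvg_l0 (s : nat -> R) x : (forall j, 0 < s j) -> s @ \oo --> 0 ->
  (fun j => fsum (s j) x) @ \oo --> ((l0 x)%:R : R).
Proof.
move=> s_gt0 s_cvg0; rewrite /l0 natr_sum; apply: cvg_sum_ord => i.
rewrite natr_sum; apply: cvg_sum_ord => j; rewrite -normr_eq0.
exact: fsig_cvg_nz.
Qed.

Lemma cvg_fsum s (u : nat -> 'M[R]_(m, n)) x :
  u @ \oo --> x -> (fun k => fsum s (u k)) @ \oo --> fsum s x.
Proof.
move=> /cvg_mxP ux; apply: cvg_sum_ord => i; apply: cvg_sum_ord => j.
exact: continuous_cvg (@fsig_continuous s _) (cvg_norm (ux i j)).
Qed.

End SmoothedCount.

Section MonotoneApproximation.
Variables (R : realType) (V : normedModType R).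
Variables (f : nat -> V -> \bar R) (F : V -> \bar R).
Hypothesis bounded_subseq_cvg : forall (u : nat -> V) (B : R), (forall k, `|u k| <= B) ->
  exists phi : nat -> nat, (forall k, (phi k < phi k.+1)%N) /\
    exists X : V, (fun k => u (phi k)) @ \oo --> X.
Hypothesis f_ge0 : forall j W, (0 <= f j W)%E.
Hypothesis f_nondecreasing : forall j W, (f j W <= f j.+1 W)%E.
Hypothesis f_le : forall j W, (f j W <= F W)%E.
Hypothesis F_le_sup : forall W (c : R), (forall j, (f j W <= c%:E)%E) -> (F W <= c%:E)%E.
Hypothesis f_lsc : forall j (u : nat -> V) (X : V) (c : R), u @ \oo --> X ->
  (forall e, 0 < e -> \forall k \near \oo, (f j (u k) <= (c + e)%:E)%E) ->
  (f j X <= c%:E)%E.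
Hypothesis f0_level_bounded : forall c : R,
  exists B : R, forall W, (f 0 W <= c%:E)%E -> `|W| <= B.
Hypothesis F_proper : exists W, (F W < +oo)%E.

Lemma f_homo i j W : (i <= j)%N -> (f i W <= f j W)%E.
Proof.
move=> /subnK <-; elim: (j - i)%N => [|k ih] //.
by rewrite addSn; exact: le_trans ih (f_nondecreasing _ _).
Qed.

Lemma f_level_bounded c : exists B : R, forall j W, (f j W <= c%:E)%E -> `|W| <= B.
Proof.
have [B fB] := f0_level_bounded c; exists B => j W fc.
exact/fB/(le_trans (f_homo W (leq0n j))).
Qed.

Lemma inf_f_le j W : (inf_of (f j) <= f j W)%E.
Proof. by apply: ereal_inf_lbound; exists W. Qed.

Lemma inf_F_le W : (inf_of F <= F W)%E.
Proof. by apply: ereal_inf_lbound; exists W. Qed.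

Lemma inf_f_le_inf_F j : (inf_of (f j) <= inf_of F)%E.
Proof.
by apply: le_ereal_inf_tmp => _ [W _ <-]; exact: le_trans (inf_f_le j W) (f_le j W).
Qed.

Lemma inf_F_fin_num : inf_of F \is a fin_num.
Proof.
rewrite ge0_fin_numE; first by have [W FW] := F_proper; exact: le_lt_trans (inf_F_le W) FW.
by apply: le_ereal_inf_tmp => _ [W _ <-]; exact: le_trans (f_ge0 0 W) (f_le 0 W).
Qed.

Lemma inf_f_fin_num j : inf_of (f j) \is a fin_num.
Proof.
rewrite ge0_fin_numE; last by apply: le_ereal_inf_tmp => _ [W _ <-]; exact: f_ge0.
by apply: le_lt_trans (inf_f_le_inf_F j) _; rewrite ltey_eq inf_F_fin_num.
Qed.

Let infF := fine (inf_of F).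
Let inff j := fine (inf_of (f j)).

Let inf_FE : inf_of F = infF%:E.
Proof. by rewrite fineK // inf_F_fin_num. Qed.

Let inf_fE j : inf_of (f j) = (inff j)%:E.
Proof. by rewrite fineK // inf_f_fin_num. Qed.

Let inff_le j : inff j <= infF.
Proof. by rewrite -lee_fin -inf_fE -inf_FE inf_f_le_inf_F. Qed.

Let inff_homo i j : (i <= j)%N -> inff i <= inff j.
Proof.
move=> ij; rewrite -lee_fin -!inf_fE.
by apply: le_ereal_inf_tmp => _ [W _ <-]; exact: le_trans (inf_f_le i W) (f_homo W ij).
Qed.

(* For large k, f_j <= f_(phi k) at u k; lower semicontinuity bounds f_j X and
   F is the supremum of the f_j. *)
Lemma F_le_of_subseq (phi : nat -> nat) (u : nat -> V) X (c : R) (e : nat -> R) :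
  (forall k, (phi k < phi k.+1)%N) -> e @ \oo --> 0 -> u @ \oo --> X ->
  (forall k, (f (phi k) (u k) <= (c + e k)%:E)%E) -> (F X <= c%:E)%E.
Proof.
move=> phiS e0 uX fu; apply: F_le_sup => j; apply: (f_lsc uX) => eps eps0.
have [N _ Ne] := cvgr_le 0 e0 eps eps0.
exists (maxn N j) => // k /= Nk.
have jk : (j <= phi k)%N.
  exact: leq_trans (leq_maxr N j) (leq_trans Nk (leq_subseq phiS k)).
apply: le_trans (f_homo (u k) jk) (le_trans (fu k) _).
by rewrite lee_fin lerD2l Ne //= (leq_trans (leq_maxl N j) Nk).
Qed.

Lemma argmin_F_of_le X : (F X <= infF%:E)%E -> argmin F X.
Proof.
move=> FX; split; last exact: le_lt_trans FX (ltry _).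
by apply/le_anti; rewrite inf_FE FX -inf_FE inf_F_le.
Qed.

Lemma approx_minimizer j k : exists W, (f j W <= (inff j + k.+1%:R^-1)%:E)%E.
Proof.
have : (inf_of (f j) < (inff j + k.+1%:R^-1)%:E)%E by rewrite inf_fE lte_fin ltrDl.
by move=> /ereal_inf_lt[_ [W _ <-] fW]; exists W; exact: ltW.
Qed.

Lemma approx_minimizers_bounded (W : nat -> V) (j : nat -> nat) :
  (forall k, (f (j k) (W k) <= (inff (j k) + k.+1%:R^-1)%:E)%E) ->
  exists B : R, forall k, `|W k| <= B.
Proof.
move=> fW; have [B fB] := f_level_bounded (infF + 1); exists B => k.
apply: fB (le_trans (fW k) _); rewrite lee_fin lerD ?inff_le //.
by rewrite invf_le1 // ler1n.
Qed.

Lemma argmin_f_neq0 j : argmin (f j) !=set0.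
Proof.
have /choice[W fW] := approx_minimizer j.
have [B WB] := approx_minimizers_bounded (j := fun=> j) fW.
have [phi [phiS [X WX]]] := bounded_subseq_cvg WB.
have fX : (f j X <= (inff j)%:E)%E.
  apply: (f_lsc WX) => e e0.
  have [N _ Ne] := cvgr_le 0 (cvg_subseq phiS (@cvg_harmonic R)) e e0.
  by exists N => // k /= Nk; apply: le_trans (fW _) _; rewrite lee_fin lerD2l Ne.
exists X; split; last exact: le_lt_trans fX (ltry _).
by apply/le_anti; rewrite inf_fE fX -inf_fE inf_f_le.
Qed.

Lemma inf_f_cvg : (fun j => inf_of (f j)) @ \oo --> inf_of F.
Proof.
rewrite inf_FE (_ : (fun j => _) = fun j => (inff j)%:E); last first.
  by apply/funext => j; rewrite inf_fE.
apply/fine_cvgP; split; first exact: nearW.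
apply/cvgrPdist_lt => e e0.
have [j0 j0e] : exists j0, infF - e < inff j0.
  apply: contrapT => no_j0.
  have inff_le_e j : inff j <= infF - e.
    by rewrite leNgt; apply/negP => ?; apply: no_j0; exists j.
  have /choice[W fW] := fun k => approx_minimizer k k.
  have [B WB] := approx_minimizers_bounded (j := id) fW.
  have [phi [phiS [X WX]]] := bounded_subseq_cvg WB.
  have FX : (F X <= (infF - e)%:E)%E.
    apply: (F_le_of_subseq phiS (cvg_subseq phiS (@cvg_harmonic R)) WX) => k.
    by apply: le_trans (fW _) _; rewrite lee_fin lerD2r.
  by have := le_trans (inf_F_le X) FX; rewrite inf_FE lee_fin; lra.
exists j0 => // k /= j0k; have := inff_homo j0k; have := inff_le k.
by rewrite ger0_norm ?subr_ge0 //; lra.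
Qed.

Lemma argmin_f_bounded : bounded_in (\bigcup_j argmin (f j)).
Proof.
have [B fB] := f_level_bounded infF; exists B => W [j _ [fW _]].
by apply: (fB j); rewrite fW inf_fE lee_fin.
Qed.

Lemma outer_limit_argmin_f : outer_limit (fun j => argmin (f j)) `<=` argmin F.
Proof.
move=> X [phi [phiS [W [W_argmin WX]]]]; apply: argmin_F_of_le.
apply: (F_le_of_subseq phiS (cvg_cst 0) WX) => k.
by have [-> _] := W_argmin k; rewrite inf_fE addr0 lee_fin.
Qed.

Section EpsArgmin.
Variables (eps : nat -> R) (W : nat -> V).
Hypothesis W_eps_argmin : forall j, eps_argmin (eps j) (f j) (W j).

Let fW_le j : (f j (W j) <= (infF + eps j)%:E)%E.
Proof. by apply: le_trans (W_eps_argmin j) _; rewrite inf_fE lee_fin lerD2r. Qed.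

Lemma eps_argmin_bounded : (forall j, eps j.+1 <= eps j) -> bounded_in (range W).
Proof.
move=> eps_noninc; have eps_le j : eps j <= eps 0.
  by elim: j => // j; exact: le_trans (eps_noninc j).
have [B fB] := f_level_bounded (infF + eps 0); exists B => _ [j _ <-].
by apply: (fB j); apply: le_trans (fW_le j) _; rewrite lee_fin lerD2l.
Qed.

Lemma eps_argmin_cluster : eps @ \oo --> 0 ->
  forall X, cluster_point W X -> argmin F X.
Proof.
move=> eps0 X [phi [phiS WX]]; apply: argmin_F_of_le.
exact: F_le_of_subseq phiS (cvg_subseq phiS eps0) WX (fun k => fW_le (phi k)).
Qed.

End EpsArgmin.

End MonotoneApproximation.

Section ControlProblem.
Variable R : realType.
Variables (n m M l q : nat).
Variables (A : 'I_M -> 'M[R]_n) (B2 : 'I_M -> 'M[R]_(n, m)).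
Variables (B1 : 'M[R]_(n, l)) (C : 'M[R]_(q, n)) (D : 'M[R]_(q, m)).

Definition feasible (W : 'M[R]_(n + m)) : Prop :=
  psd W /\ (forall i, psd (Psi A B2 B1 i W)) /\ in_Omega W.

Lemma r1DE W t : (r1 A B2 B1 C D W + t%:E)%E =
  if `[< feasible W >] then (inner C D W + t)%:E else +oo%E.
Proof. by rewrite /r1 /feasible; case: ifP. Qed.

Lemma feasible_closed (u : nat -> 'M[R]_(n + m)) X :
  u @ \oo --> X -> (\forall k \near \oo, feasible (u k)) -> feasible X.
Proof.
move=> uX u_feas; split; last split.
- by apply: psd_closed uX _; apply: filterS u_feas => k [].
- move=> i; apply: (@psd_closed _ _ (fun k => Psi A B2 B1 i (u k))); last first.
    by apply: filterS u_feas => k [_ []].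
  apply: cvgN; apply: cvg_mulmxr; apply: cvg_mulmxl; apply: cvgD (cvg_cst _).
  exact: cvgD (cvg_mulmxl _) (cvg_mulmxr _).
- move=> i j ij; have /cvg_mxP /(_ (lshift m i) (lshift m j)) uXij := uX.
  have uij0 : (fun k => u k (lshift m i) (lshift m j)) @ \oo --> (0 : R).
    by apply: cvg_near_cst; apply: filterS u_feas => k [_ [_ /(_ i j ij) ->]].
  exact: cvg_unique uXij uij0.
Qed.

Lemma cvg_Kx (u : nat -> 'M[R]_(n + m)) X :
  u @ \oo --> X -> (fun k => Kx (u k)) @ \oo --> Kx X.
Proof. by move=> uX; apply: cvg_mulmxr; exact: cvg_mulmxl. Qed.

Variables (gamma : R) (sigma : nat -> R).
Hypotheses (gamma_gt0 : 0 < gamma) (sigma_gt0 : forall j, 0 < sigma j).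

Let Hs j := Hsig A B2 B1 C D gamma (sigma j).
Let H := Hl0 A B2 B1 C D gamma.

Lemma Hsig_ge0 j W : (0 <= Hs j W)%E.
Proof.
rewrite /Hs /Hsig r1DE; case: asboolP => [[W_psd _]|_]; last exact: leey.
by rewrite lee_fin addr_ge0 ?inner_ge0 // mulr_ge0 ?fsum_ge0 // ltW.
Qed.

Lemma Hsig_nondecreasing j W :
  sigma j.+1 <= sigma j -> (Hs j W <= Hs j.+1 W)%E.
Proof.
move=> sigmaS; rewrite /Hs /Hsig !r1DE; case: asboolP => _ //.
by rewrite lee_fin lerD2l ler_wpM2l ?fsum_le // ltW.
Qed.

Lemma Hsig_le_Hl0 j W : (Hs j W <= H W)%E.
Proof.
rewrite /Hs /H /Hsig /Hl0 !r1DE; case: asboolP => _ //.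
by rewrite lee_fin lerD2l ler_wpM2l ?fsum_le_l0 // ltW.
Qed.

Lemma Hl0_le_sup W (c : R) : sigma @ \oo --> 0 ->
  (forall j, (Hs j W <= c%:E)%E) -> (H W <= c%:E)%E.
Proof.
move=> sigma0 Hs_le; rewrite /H /Hl0 r1DE; case: asboolP => W_feas; last first.
  by have := Hs_le 0%N; rewrite /Hs /Hsig r1DE (asboolF W_feas) leye_eq.
have Hs_cvg : (fun j => inner C D W + gamma * fsum (sigma j) (Kx W)) @ \oo -->
    inner C D W + gamma * (l0 (Kx W))%:R.
  exact: cvgD (cvg_cst _) (cvgM (cvg_cst _) (fsum_cvg_l0 sigma_gt0 sigma0)).
rewrite lee_fin; apply: cvgr_to_le Hs_cvg _; apply: nearW => j.
by have := Hs_le j; rewrite /Hs /Hsig r1DE (asboolT W_feas) lee_fin.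
Qed.

Lemma Hsig_lsc j (u : nat -> 'M[R]_(n + m)) X (c : R) : u @ \oo --> X ->
  (forall e, 0 < e -> \forall k \near \oo, (Hs j (u k) <= (c + e)%:E)%E) ->
  (Hs j X <= c%:E)%E.
Proof.
move=> uX Hs_le.
have u_feas : \forall k \near \oo, feasible (u k).
  apply: filterS (Hs_le 1 ltr01) => k; rewrite /Hs /Hsig r1DE.
  by case: asboolP => // _; rewrite leye_eq.
rewrite /Hs /Hsig r1DE (asboolT (feasible_closed uX u_feas)) lee_fin.
have Hs_cvg : (fun k => inner C D (u k) + gamma * fsum (sigma j) (Kx (u k))) @ \oo -->
    inner C D X + gamma * fsum (sigma j) (Kx X).
  exact: cvgD (cvg_inner uX) (cvgM (cvg_cst _) (cvg_fsum (cvg_Kx uX))).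
apply: cvgr_to_le_eps Hs_cvg _ => e e0.
apply: filterS (filterI u_feas (Hs_le e e0)) => k [feas_k].
by rewrite /Hs /Hsig r1DE (asboolT feas_k) lee_fin.
Qed.

Lemma Hsig_level_bounded : pd (C^T *m C) -> pd (D^T *m D) -> forall c : R,
  exists B : R, forall W, (Hs 0 W <= c%:E)%E -> `|W| <= B.
Proof.
move=> C_pd D_pd c; have [B innerB] := inner_sublevel_bounded C_pd D_pd c.
exists B => W; rewrite /Hs /Hsig r1DE.
case: asboolP => [[W_psd _]|_]; last by rewrite leye_eq.
rewrite lee_fin => Wc; apply: innerB W_psd (le_trans _ Wc).
by rewrite lerDl mulr_ge0 ?fsum_ge0 // ltW.
Qed.

Lemma Hl0_proper : (exists W, (r1 A B2 B1 C D W < +oo)%E) -> exists W, (H W < +oo)%E.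
Proof.
move=> [W r1W]; exists W; move: r1W.
by rewrite /H /Hl0 /r1; case: asboolP => // _ _; exact: ltry.
Qed.

End ControlProblem.
Unset Implicit Arguments.

Theorem theorem25 (R : realType) (n m M l q : nat)
  (A : 'I_M -> 'M[R]_n) (B2 : 'I_M -> 'M[R]_(n, m))
  (B1 : 'M[R]_(n, l)) (C : 'M[R]_(q, n)) (D : 'M[R]_(q, m))
  (gamma : R) (sigma : nat -> R) :
  (0 < n)%N -> (0 < m)%N -> (0 < M)%N ->
  C^T *m D = 0 -> pd (D^T *m D) -> pd (B1 *m B1^T) -> pd (C^T *m C) ->
  (exists W, (r1 A B2 B1 C D W < +oo)%E) ->
  0 < gamma ->
  (forall i, 0 < sigma i) -> (forall i, sigma i.+1 <= sigma i) ->
  sigma @ \oo --> 0 ->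
  let Hs := fun i => Hsig A B2 B1 C D gamma (sigma i) in
  let H := Hl0 A B2 B1 C D gamma in
  (* 1 *)
  ((fun i => inf_of (Hs i)) @ \oo --> inf_of H)
  (* 2 *)
  /\ (exists N : set nat, finite_set (~` N) /\
        (forall v, N v -> argmin (Hs v) !=set0) /\
        bounded_in (\bigcup_(v in N) argmin (Hs v)) /\
        outer_limit (fun v => argmin (Hs v)) `<=` argmin H)
  (* 3 *)
  /\ (forall eps : nat -> R,
        (forall i, 0 <= eps i) -> (forall i, eps i.+1 <= eps i) ->
        eps @ \oo --> 0 ->
        forall Wt : nat -> 'M[R]_(n + m),
        (forall i, eps_argmin (eps i) (Hs i) (Wt i)) ->
        bounded_in (range Wt) /\
        (forall X, cluster_point Wt X -> argmin H X)).
Proof.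
move=> _ _ _ _ D_pd _ C_pd r1_proper gamma_gt0 sigma_gt0 sigma_noninc sigma0 Hs H.
have BW := @mx_bolzano_weierstrass R (n + m) (n + m).
have Hs_ge0 j W : (0 <= Hs j W)%E by exact: Hsig_ge0.
have Hs_nondecr j W : (Hs j W <= Hs j.+1 W)%E by exact: Hsig_nondecreasing (sigma_noninc j).
have Hs_le j W : (Hs j W <= H W)%E by exact: Hsig_le_Hl0.
have H_le_sup W (c : R) : (forall j, (Hs j W <= c%:E)%E) -> (H W <= c%:E)%E.
  exact: Hl0_le_sup sigma0.
have Hs_lsc j (u : nat -> 'M[R]_(n + m)) X (c : R) : u @ \oo --> X ->
    (forall e, 0 < e -> \forall k \near \oo, (Hs j (u k) <= (c + e)%:E)%E) ->
    (Hs j X <= c%:E)%E.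
  exact: Hsig_lsc.
have Hs0_bounded := Hsig_level_bounded A B2 B1 gamma_gt0 sigma_gt0 C_pd D_pd.
have H_proper := Hl0_proper gamma r1_proper.
split.
  exact: inf_f_cvg BW Hs_ge0 Hs_nondecr Hs_le H_le_sup Hs_lsc Hs0_bounded H_proper.
split.
  exists setT; split; first by rewrite setCT; exact: finite_set0.
  split=> [j _|].
    exact: argmin_f_neq0 BW Hs_ge0 Hs_nondecr Hs_le Hs_lsc Hs0_bounded H_proper j.
  split; first exact: argmin_f_bounded Hs_ge0 Hs_nondecr Hs_le Hs0_bounded H_proper.
  exact: outer_limit_argmin_f Hs_ge0 Hs_nondecr Hs_le H_le_sup Hs_lsc H_proper.
move=> eps _ eps_noninc eps0 W W_eps; split.
  exact (eps_argmin_bounded Hs_ge0 Hs_nondecr Hs_le Hs0_bounded H_proper W_eps eps_noninc).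
exact (eps_argmin_cluster Hs_ge0 Hs_nondecr Hs_le H_le_sup Hs_lsc H_proper W_eps eps0).
Qed.
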